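(* Let $p\neq0$ and let $\lambda,\mu$ be nonzero finite Borel measures on $\mathbb{S}^{n-1}$. Then a convex body $K\in\mathcal{K}^n_0$ is a solution of the maximization problem $\sup\{\Phi_{\lambda,\mu,p}(\rho_L):L\in\mathcal{K}^n_0\}$ if and only if $\rho_K$ is a solution of the maximization problem $\sup\{\Phi_{\lambda,\mu,p}(f):f\in C^+(\mathbb{S}^{n-1})\}$.
   Context: $\mathcal{K}^n_0$ is the set of compact convex subsets of $\mathbb{R}^n$ containing the origin in their interior; for $K\in\mathcal{K}^n_0$, $h_K(x)=\max_{y\in K}\langle y,x\rangle$ and $\rho_K(u)=\max\{t>0:tu\in K\}$. $C^+(\mathbb{S}^{n-1})$ denotes the positive continuous functions on $\mathbb{S}^{n-1}$. For $f\in C^+(\mathbb{S}^{n-1})$, $\langle f\rangle=\mathrm{conv}\{f(u)u:u\in\mathbb{S}^{n-1}\}$. For a measure $\nu$, $|\nu|$ denotes its total mass. The functional is $$\Phi_{\lambda,\mu,p}(f)=-\frac{1}{|\lambda|}\int_{\mathbb{S}^{n-1}}\log h_{\langle f\rangle}(x)\,d\lambda(x)-\frac1p\log\Big(\frac{1}{|\mu|}\int_{\mathbb{S}^{n-1}}f^{-p}(u)\,d\mu(u)\Big).$$ *)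

From HB Require Import structures.
From mathcomp Require Import all_boot all_order all_algebra.
From mathcomp Require Import all_classical all_reals all_analysis.
Set Implicit Arguments. Unset Strict Implicit. Unset Printing Implicit Defensive.
Import Order.TTheory GRing.Theory Num.Theory.
Import numFieldNormedType.Exports.
Local Open Scope classical_set_scope.
Local Open Scope ring_scope.

(* Ambient space R^(n+1) is represented by row vectors 'rV[R]_n.+1;
   the unit sphere is S^n (the paper's S^{n-1} with paper-n = n+1). *)

Section Sphere.
Variables (R : realType) (n : nat).
Local Notation V := 'rV[R]_n.+1.

Definition dot (x y : V) : R := \sum_(i < n.+1) x ord0 i * y ord0 i.
Definition enorm (x : V) : R := Num.sqrt (dot x x).

Definition e0 : V := \row_(j < n.+1) (j == ord0)%:R.

Lemma e0_unit : dot e0 e0 == 1.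
Proof.
apply/eqP; rewrite /dot (bigD1 ord0) //= big1 ?addr0.
  by rewrite !mxE eqxx mulr1.
by move=> i /negbTE Hi; rewrite !mxE Hi mulr0.
Qed.

Definition sphere_sub := {u : V | dot u u == 1}.
HB.instance Definition _ := Choice.on sphere_sub.
HB.instance Definition _ := isPointed.Build sphere_sub (exist _ e0 e0_unit).

(* traces on the sphere of open subsets of R^(n+1): the open sets of the
   subspace topology; they generate the Borel sigma-algebra of the sphere *)
Definition sphere_opens : set (set sphere_sub) :=
  [set [set u : sphere_sub | U (sval u)] | U in [set U : set V | open U]].
End Sphere.

Definition sphere (R : realType) (n : nat) :=
  g_sigma_algebraType (@sphere_opens R n).

Section Functional.
Variables (R : realType) (n : nat).
Local Notation V := 'rV[R]_n.+1.
Local Notation S := (sphere R n).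

Definition svec (u : S) : V := sval u.

Definition conv (A : set V) : set V :=
  [set x | exists (k : nat) (w : 'I_k -> R) (y : 'I_k -> V),
      [/\ (forall i, 0 <= w i), \sum_(i < k) w i = 1,
          (forall i, A (y i)) & x = \sum_(i < k) w i *: y i]].

Definition convex_set (K : set V) : Prop :=
  forall x y (t : R), K x -> K y -> 0 <= t <= 1 -> K (t *: x + (1 - t) *: y).

Definition convex_body0 (K : set V) : Prop :=
  [/\ compact K, convex_set K & interior K 0].

Definition supp_fun (K : set V) (x : V) : R := sup [set dot y x | y in K].

Definition radial (K : set V) (u : S) : R :=
  sup [set t : R | 0 < t /\ K (t *: svec u)].

Definition Cplus (f : S -> R) : Prop :=
  (forall u, 0 < f u) /\
  (forall u (e : R), 0 < e -> exists2 d : R, 0 < d &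
     forall v, enorm (svec v - svec u) < d -> `|f v - f u| < e).

Definition hull (f : S -> R) : set V := conv [set f u *: svec u | u in setT].

Definition Phi (lam mu : {finite_measure set S -> \bar R}) (p : R) (f : S -> R) : R :=
  - (fine (lam setT))^-1 * Rintegral lam setT (fun x => ln (supp_fun (hull f) (svec x)))
  - p^-1 * ln ((fine (mu setT))^-1 * Rintegral mu setT (fun u => f u `^ (- p))).

End Functional.

(* Write h for the support function of <f>. The set L of all x with
   <x, y> <= h y for every y is a convex body (h lies between two positive
   multiples of the Euclidean norm), it contains <f>, so f <= rho_L, and the
   hull of rho_L again has support function h: a generator rho_L(u) u with
   <u, x> < 0 is dominated by the antipodal generator rho_L(-u) (-u). The first
   term of Phi depends on f only through h, and the second term is
   nondecreasing in f for either sign of p, hence Phi f <= Phi rho_L. So a body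
   maximizing Phi among bodies also maximizes it among positive continuous
   functions; the converse holds because radial functions of convex bodies are
   positive and continuous. *)

From Pilot Require Import Defs.
From HB Require Import structures.
From mathcomp Require Import all_boot all_order all_algebra.
From mathcomp Require Import all_classical all_reals all_analysis.
From mathcomp Require Import measurable_realfun.
From mathcomp Require Import ring lra.
Set Implicit Arguments. Unset Strict Implicit. Unset Printing Implicit Defensive.
Import Order.TTheory GRing.Theory Num.Theory.
Import numFieldNormedType.Exports.
Local Open Scope classical_set_scope.
Local Open Scope ring_scope.

Section InnerProduct.
Variables (R : realType) (n : nat).
Local Notation V := 'rV[R]_n.+1.
Local Notation dot := (@dot R n).
Local Notation enorm := (@enorm R n).
Implicit Types (x y z : V) (a : R).

Lemma dotC x y : dot x y = dot y x.
Proof. by apply: eq_bigr => i _; rewrite mulrC. Qed.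

Lemma dotDl x y z : dot (x + y) z = dot x z + dot y z.
Proof. by rewrite /Defs.dot -big_split; apply: eq_bigr => i _; rewrite !mxE mulrDl. Qed.

Lemma dotZl a x z : dot (a *: x) z = a * dot x z.
Proof. by rewrite /Defs.dot big_distrr; apply: eq_bigr => i _; rewrite !mxE -mulrA. Qed.

Lemma dotNl x z : dot (- x) z = - dot x z.
Proof. by rewrite -scaleN1r dotZl mulN1r. Qed.

Lemma dot0l z : dot 0 z = 0.
Proof. by rewrite -(scale0r 0) dotZl mul0r. Qed.

Lemma dotDr x y z : dot x (y + z) = dot x y + dot x z.
Proof. by rewrite dotC dotDl !(dotC x). Qed.

Lemma dotZr a x z : dot x (a *: z) = a * dot x z.
Proof. by rewrite dotC dotZl dotC. Qed.

Lemma dotNr x z : dot x (- z) = - dot x z.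
Proof. by rewrite dotC dotNl dotC. Qed.

Lemma dot_suml k (w : 'I_k -> R) (y : 'I_k -> V) z :
  dot (\sum_(i < k) w i *: y i) z = \sum_(i < k) w i * dot (y i) z.
Proof.
rewrite (big_morph (dot^~ z) (fun x y => dotDl x y z) (dot0l z)).
by apply: eq_bigr => i _; rewrite dotZl.
Qed.

Lemma dot_ge0 x : 0 <= dot x x.
Proof. by apply: sumr_ge0 => i _; rewrite -expr2 sqr_ge0. Qed.

Lemma enorm_ge0 x : 0 <= enorm x.
Proof. exact: sqrtr_ge0. Qed.

Lemma sqr_enorm x : enorm x ^+ 2 = dot x x.
Proof. by rewrite sqr_sqrtr // dot_ge0. Qed.

Lemma enormZ a x : enorm (a *: x) = `|a| * enorm x.
Proof.
by rewrite /Defs.enorm dotZl dotC dotZl mulrA -expr2 sqrtrM ?sqrtr_sqr ?sqr_ge0.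
Qed.

Lemma enormN x : enorm (- x) = enorm x.
Proof. by rewrite -scaleN1r enormZ normrN1 mul1r. Qed.

Lemma dot_eq0 x : (dot x x == 0) = (x == 0).
Proof.
apply/idP/eqP => [/eqP x0|->]; last by rewrite dot0l.
apply/rowP => i; rewrite mxE; apply/eqP; rewrite -sqrf_eq0 eq_le sqr_ge0 andbT.
rewrite -x0 /Defs.dot (bigD1 i) //= -expr2 lerDl.
by apply: sumr_ge0 => j _; rewrite -expr2 sqr_ge0.
Qed.

Lemma enorm_gt0 x : x != 0 -> 0 < enorm x.
Proof. by rewrite sqrtr_gt0 lt_def dot_ge0 dot_eq0 andbT. Qed.

(* Cauchy-Schwarz, from [0 <= dot (b x - a y) (b x - a y)] with [a], [b] the
   norms of [x], [y] *)
Lemma dot_le_enorm x y : dot x y <= enorm x * enorm y.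
Proof.
have [->|x0] := eqVneq x 0; first by rewrite dot0l mulr_ge0 ?enorm_ge0.
have [->|y0] := eqVneq y 0; first by rewrite dotC dot0l mulr_ge0 ?enorm_ge0.
have [a0 b0] := (enorm_gt0 x0, enorm_gt0 y0).
set a := enorm x in a0 *; set b := enorm y in b0 *.
have := dot_ge0 (b *: x - a *: y).
rewrite !(dotDl, dotDr, dotNl, dotNr, dotZl, dotZr) [dot y x]dotC.
rewrite -!sqr_enorm -/a -/b => h.
rewrite -(@ler_pM2l _ (2 * a * b)) ?mulr_gt0 //; nra.
Qed.

Lemma coord_le_enorm x i : `|x ord0 i| <= enorm x.
Proof.
rewrite -sqrtr_sqr ler_sqrt ?dot_ge0 // /Defs.dot (bigD1 i) //= -expr2 lerDl.
by apply: sumr_ge0 => j _; rewrite -expr2 sqr_ge0.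
Qed.

Lemma norm_le_enorm x : `|x| <= enorm x.
Proof.
rewrite [leLHS]/Num.norm /= mx_normrE.
apply: bigmax_le => [|[i j] _]; first exact: enorm_ge0.
by rewrite (ord1 i); exact: coord_le_enorm.
Qed.

Lemma enorm_le_norm x : enorm x <= n.+1%:R * `|x|.
Proof.
have sum_ge0 : 0 <= \sum_i `|x ord0 i| by apply: sumr_ge0.
apply: (@le_trans _ _ (\sum_i `|x ord0 i|)).
  rewrite -(ger0_norm sum_ge0) -sqrtr_sqr ler_sqrt ?sqr_ge0 // expr2 mulr_suml.
  apply: ler_sum => i _; rewrite mulr_sumr (bigD1 i) //= -normrM ler_wpDr ?ler_norm //.
  by apply: sumr_ge0 => j _; rewrite mulr_ge0.
have -> : n.+1%:R * `|x| = \sum_(i < n.+1) `|x| by rewrite sumr_const card_ord mulr_natl.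
apply: ler_sum => i _.
rewrite [leRHS]/Num.norm /= mx_normrE.
exact: (le_bigmax _ (fun ij : 'I_1 * 'I_n.+1 => `|x ij.1 ij.2|) (ord0, i)).
Qed.

Lemma continuous_dotl y : continuous (dot^~ y).
Proof.
apply: continuous_big => [|i _ x].
  exact: (@pseudometric_normed_Zmodule.add_continuous R R^o).
by apply: continuousM; [exact: coord_continuous | exact: cst_continuous].
Qed.

Lemma continuous_dot_diag : continuous (fun x => dot x x).
Proof.
apply: continuous_big => [|i _ x].
  exact: (@pseudometric_normed_Zmodule.add_continuous R R^o).
by apply: continuousM; exact: coord_continuous.
Qed.

End InnerProduct.

Section SphereFunctions.
Variables (R : realType) (n : nat).
Local Notation V := 'rV[R]_n.+1.
Local Notation S := (sphere R n).
Local Notation dot := (@dot R n).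
Local Notation enorm := (@enorm R n).

Lemma dot_svec (u : S) : dot (svec u) (svec u) = 1.
Proof. exact/eqP/(proj2_sig u). Qed.

Lemma enorm_svec (u : S) : enorm (svec u) = 1.
Proof. by rewrite /Defs.enorm dot_svec sqrtr1. Qed.

Lemma antipode_subproof (u : S) : dot (- svec u) (- svec u) == 1.
Proof. by rewrite dotNl dotNr opprK dot_svec. Qed.

Definition antipode (u : S) : S := exist _ (- svec u) (antipode_subproof u).

Definition sphere_set : set V := [set x | dot x x = 1].

Lemma compact_sphere_set : compact sphere_set.
Proof.
apply: bounded_closed_compact.
  exists 1; split=> [|M M1 x /= x1]; first exact: num_real.
  by rewrite (le_trans (norm_le_enorm x)) ?ltW // /Defs.enorm x1 sqrtr1.
by have := (continuous_closedP _).1 (@continuous_dot_diag R n) _ (@closed_eq R 1).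
Qed.

Definition sphere_continuous (g : S -> R) : Prop :=
  forall u (e : R), 0 < e -> exists2 d : R, 0 < d &
    forall v, enorm (svec v - svec u) < d -> `|g v - g u| < e.

Lemma Cplus_sphere_continuous (f : S -> R) : Cplus f -> sphere_continuous f.
Proof. by case. Qed.

(* [g] read on ['rV_n.+1], where the extreme value theorem and the subspace
   topology are available; the value off the sphere is irrelevant *)
Definition sphere_ext (g : S -> R) (x : V) : R :=
  if @insub _ _ (sphere_sub R n) x is Some u then g u else 0.

Lemma sphere_ext_svec g (u : S) : sphere_ext g (svec u) = g u.
Proof. by rewrite /sphere_ext /svec (valK (u : sphere_sub R n)). Qed.

Lemma sphere_ext_continuous g : sphere_continuous g ->
  {within sphere_set, continuous (sphere_ext g)}.
Proof.
move=> gc; apply/subspace_continuousP => x Sx.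
pose u : S := exist _ x (introT eqP Sx).
rewrite /from_subspace -[x]/(svec u) sphere_ext_svec; apply/cvgrPdist_lt => e e0.
have [d d0 hd] := gc u e e0.
rewrite /within /=; apply/nbhs_ballP; exists (d / n.+1%:R) => [|y].
  by rewrite /= divr_gt0 ?ltr0n.
rewrite -ball_normE /= -[_ - _]opprB normrN => uy Sy.
rewrite -[y]/(svec (exist _ y (introT eqP Sy) : S)) sphere_ext_svec distrC.
apply: hd; apply: le_lt_trans (enorm_le_norm _) _.
by rewrite -ltr_pdivlMl ?ltr0n // mulrC.
Qed.

Lemma sphere_continuous_extrema g : sphere_continuous g ->
  exists u v : S, forall w, g u <= g w <= g v.
Proof.
move=> /sphere_ext_continuous gc.
have S0 : sphere_set !=set0 by exists (svec (point : S)); exact: dot_svec.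
have [x /set_mem Sx xmin] := EVT_min_rV S0 compact_sphere_set gc.
have [y /set_mem Sy ymax] := EVT_max_rV S0 compact_sphere_set gc.
exists (exist _ x (introT eqP Sx)), (exist _ y (introT eqP Sy)) => w.
rewrite -!sphere_ext_svec.
have Sw : svec w \in sphere_set by apply/mem_set; exact: dot_svec.
by rewrite xmin ?ymax.
Qed.

Lemma sphere_continuous_measurable g : sphere_continuous g -> measurable_fun setT g.
Proof.
move=> /sphere_ext_continuous gc.
apply: (measurability _ (RGenOInfty.measurableE R)) => _ [_ [a ->] <-].
have /open_subspaceP [U oU UE] :
    open ((sphere_ext g @^-1` [set y | a < y]) : set (subspace sphere_set)).
  exact: (continuousP _).1 gc _ (@open_gt R a).
rewrite set_itvoy.
have -> : setT `&` g @^-1` [set y | a < y] = [set u : S | U (svec u)].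
  rewrite setTI; apply/seteqP; split=> u /= h; have := congr1 (@^~ (svec u)) UE;
    rewrite /= sphere_ext_svec => E; have Su : sphere_set (svec u) := dot_svec u.
    by have := conj h Su; rewrite -E => -[].
  by have := conj h Su; rewrite E => -[].
by apply: sub_sigma_algebra; exists U.
Qed.

End SphereFunctions.

Section RadialFunction.
Variables (R : realType) (n : nat).
Local Notation V := 'rV[R]_n.+1.
Local Notation S := (sphere R n).
Local Notation enorm := (@enorm R n).

Lemma compact_enorm_bounded (L : set V) : compact L ->
  exists M, forall x, L x -> enorm x <= M.
Proof.
move=> /compact_bounded [M0 [_ HM]]; exists (n.+1%:R * (`|M0| + 1)) => x Lx.
apply: le_trans (enorm_le_norm x) _; rewrite ler_wpM2l ?ler0n // HM //.
by apply: le_lt_trans (ler_norm M0) _; rewrite ltrDl.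
Qed.

Lemma interior0_enorm_ball (L : set V) : interior L 0 ->
  exists2 r, 0 < r & forall x, enorm x < r -> L x.
Proof.
move=> /nbhs_ballP [r r0 Hr]; exists r => // x xr; apply: Hr.
by rewrite -ball_normE /= sub0r normrN (le_lt_trans (norm_le_enorm x)).
Qed.

Section ConvexBody.
Variables (L : set V) (M r : R).
Hypotheses (convL : Defs.convex_set L) (r0 : 0 < r)
  (L_ball : forall x, enorm x < r -> L x) (L_bounded : forall x, L x -> enorm x <= M).

Let r_half : 0 < r / 2 < r.
Proof. by have := r0; rewrite !(divr_gt0, ltr_pdivrMr) //; lra. Qed.

Let rays (u : S) := [set t : R | 0 < t /\ L (t *: svec u)].

Lemma rays_ball u t : 0 < t < r -> rays u t.
Proof.
case/andP=> t0 tr; split => //.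
by apply: L_ball; rewrite enormZ enorm_svec mulr1 gtr0_norm.
Qed.

Lemma rays_bounded u t : rays u t -> t <= M.
Proof. by case=> t0 /L_bounded; rewrite enormZ enorm_svec mulr1 gtr0_norm. Qed.

Lemma has_sup_rays u : has_sup (rays u).
Proof.
split; first by exists (r / 2); exact: rays_ball.
by exists M => t; exact: rays_bounded.
Qed.

Lemma rays_le_radial u t : rays u t -> t <= radial L u.
Proof. by apply: ub_le_sup; case: (has_sup_rays u). Qed.

Lemma radial_ge u : r / 2 <= radial L u.
Proof. exact/rays_le_radial/rays_ball. Qed.

Lemma radial_le u : radial L u <= M.
Proof. by apply: ge_sup; [case: (has_sup_rays u) | exact: rays_bounded]. Qed.

Lemma convex_ball_shift x w th : L x -> 0 < th <= 1 -> enorm w < th * r ->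
  L ((1 - th) *: x + w).
Proof.
move=> Lx /andP[th0 th1] wr.
have -> : (1 - th) *: x + w = th *: (th^-1 *: w) + (1 - th) *: x.
  by rewrite scalerA divff ?gt_eqF // scale1r addrC.
apply: convL => //; last by apply/andP; split; lra.
by apply: L_ball; rewrite enormZ gtr0_norm ?invr_gt0 // mulrC ltr_pdivrMr // mulrC.
Qed.

Lemma radial_lower_semicontinuous e : 0 < e -> exists2 d, 0 < d &
  forall u v : S, enorm (svec v - svec u) < d -> radial L u - e < radial L v.
Proof.
move=> e0; have M0 : 0 < M.
  case/andP: r_half => r2 _.
  exact: lt_le_trans r2 (le_trans (radial_ge point) (radial_le point)).
pose th := Num.min (1 / 2) (e / (2 * M)).
have th0 : 0 < th by rewrite lt_min !divr_gt0 ?mulr_gt0.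
have th_half : th <= 1 / 2 by rewrite ge_min lexx.
have thM : th * M <= e / 2.
  have : th <= e / (2 * M) by rewrite ge_min lexx orbT.
  by rewrite ler_pdivlMr ?mulr_gt0 //; lra.
exists (th * r / M) => [|u v uv]; first by rewrite divr_gt0 ?mulr_gt0.
have [s us] := sup_adherent (eps := e / 2) ltac:(lra) (has_sup_rays u).
rewrite -/(radial L u) => hs.
have sM : s <= M := rays_bounded us.
have [s0 Ls] := us.
(* [(1 - th) s v] is a convex combination of [s u] and a point of the ball of
   radius [r] *)
have : rays v ((1 - th) * s).
  split; first by rewrite mulr_gt0 //; lra.
  have -> : ((1 - th) * s) *: svec v =
      (1 - th) *: (s *: svec u) + ((1 - th) * s) *: (svec v - svec u).
    by rewrite scalerBr scalerA addrCA subrr addr0.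
  apply: convex_ball_shift => //; first by apply/andP; split; lra.
  rewrite enormZ gtr0_norm ?mulr_gt0 //; last lra.
  apply: (@le_lt_trans _ _ (M * enorm (svec v - svec u))).
    by rewrite ler_wpM2r ?enorm_ge0 // (le_trans _ sM) // ler_piMl ?ltW //; lra.
  by rewrite -ltr_pdivlMl // mulrC.
move=> /rays_le_radial; have := ler_wpM2l (ltW th0) sM.
by rewrite mulrBl mul1r; lra.
Qed.

End ConvexBody.

Lemma radial_Cplus (L : set V) : convex_body0 L -> Cplus (radial L).
Proof.
case=> /compact_enorm_bounded [M LM] convL /interior0_enorm_ball [r r0 Lr].
split=> [u|u e e0]; first by have := radial_ge r0 Lr LM u; lra.
have [d d0 Hd] := radial_lower_semicontinuous convL r0 Lr LM e0.
exists d => // v uv; have := Hd u v uv.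
have := Hd v u; rewrite -opprB enormN => /(_ uv).
by rewrite ltr_norml; lra.
Qed.

End RadialFunction.

Section SupportFunction.
Variables (R : realType) (n : nat).
Local Notation V := 'rV[R]_n.+1.
Local Notation S := (sphere R n).
Local Notation dot := (@dot R n).
Local Notation enorm := (@enorm R n).

Lemma conv_dot_le (A : set V) (x y : V) M :
  (forall a, A a -> dot a y <= M) -> Defs.conv A x -> dot x y <= M.
Proof.
move=> AM [k [w [z [w0 w1 Az ->]]]]; rewrite dot_suml.
apply: (@le_trans _ _ (\sum_(i < k) w i * M)); last by rewrite -mulr_suml w1 mul1r.
by apply: ler_sum => i _; rewrite ler_wpM2l ?AM.
Qed.

Lemma sub_conv (A : set V) : A `<=` Defs.conv A.
Proof.
move=> a Aa; exists 1%N, (fun=> 1), (fun=> a).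
by split; rewrite ?big_ord1 ?scale1r.
Qed.

Lemma supp_fun_ge (A : set V) (x a : V) :
  has_ubound [set dot b x | b in A] -> A a -> dot a x <= supp_fun A x.
Proof. by move=> Aub Aa; apply: ub_le_sup => //; exists a. Qed.

Lemma supp_fun_le (A : set V) (x : V) M :
  A !=set0 -> (forall a, A a -> dot a x <= M) -> supp_fun A x <= M.
Proof.
move=> [a Aa] AM; apply: ge_sup; first by exists (dot a x), a.
by move=> _ [b Ab <-]; exact: AM.
Qed.

Definition wulff_shape (h : V -> R) : set V := [set x | forall y, dot x y <= h y].

Lemma wulff_shape_convex h : Defs.convex_set (wulff_shape h).
Proof.
move=> x z t Lx Lz /andP[t0 t1] y; rewrite dotDl !dotZl.
apply: (@le_trans _ _ (t * h y + (1 - t) * h y)); last by rewrite -mulrDl subrKC mul1r.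
by apply: lerD; apply: ler_wpM2l; rewrite ?subr_ge0.
Qed.

Lemma wulff_shape_closed h : closed (wulff_shape h).
Proof.
have -> : wulff_shape h = \bigcap_(y in setT) [set x | dot x y <= h y].
  by apply/seteqP; split => x /= Lx y; [move=> _; exact: Lx | exact: Lx y I].
apply: closed_bigI => y _.
by have := (continuous_closedP _).1 (@continuous_dotl R n y) _ (@closed_le R (h y)).
Qed.

Lemma wulff_shape_ball h c : (forall y, c * enorm y <= h y) ->
  forall x, enorm x < c -> wulff_shape h x.
Proof.
move=> h_ge x xc y; apply: le_trans (dot_le_enorm x y) (le_trans _ (h_ge y)).
by rewrite ler_wpM2r ?enorm_ge0 ?ltW.
Qed.

Lemma wulff_shape_bounded h C : 0 <= C -> (forall y, h y <= C * enorm y) ->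
  forall x, wulff_shape h x -> enorm x <= C.
Proof.
move=> C0 h_le x Lx; have := le_trans (Lx x) (h_le x).
by rewrite -sqr_enorm; have := enorm_ge0 x; nra.
Qed.

Lemma wulff_shape_body h c C : 0 < c ->
  (forall y, c * enorm y <= h y) -> (forall y, h y <= C * enorm y) ->
  convex_body0 (wulff_shape h).
Proof.
move=> c0 h_ge h_le; have C0 : 0 <= C.
  by have := le_trans (h_ge (svec (point : S))) (h_le _); rewrite enorm_svec !mulr1; lra.
split; [|exact: wulff_shape_convex|].
  apply: bounded_closed_compact; last exact: wulff_shape_closed.
  exists C; split=> [|M CM x Lx]; first exact: num_real.
  apply: le_trans (norm_le_enorm x) (le_trans _ (ltW CM)).
  exact: wulff_shape_bounded Lx.
apply/nbhs_ballP; exists (c / n.+1%:R); first by rewrite /= divr_gt0 ?ltr0n.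
move=> x; rewrite -ball_normE /= sub0r normrN => xc; apply: wulff_shape_ball h_ge _ _.
by rewrite (le_lt_trans (enorm_le_norm x)) // mulrC -ltr_pdivlMr ?ltr0n.
Qed.

End SupportFunction.

Section HullOfBoundedFunction.
Variables (R : realType) (n : nat).
Local Notation V := 'rV[R]_n.+1.
Local Notation S := (sphere R n).
Local Notation dot := (@dot R n).
Local Notation enorm := (@enorm R n).

Variables (f : S -> R) (c C : R).
Hypotheses (c0 : 0 < c) (f_bounds : forall u, c <= f u <= C).

Let f_ge u : c <= f u. Proof. by case/andP: (f_bounds u). Qed.
Let f_le u : f u <= C. Proof. by case/andP: (f_bounds u). Qed.
Let f_gt0 u : 0 < f u. Proof. exact: lt_le_trans c0 (f_ge u). Qed.

Local Notation h := (supp_fun (hull f)).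

Lemma hull_gen (g : S -> R) u : hull g (g u *: svec u).
Proof. by apply: sub_conv; exists u. Qed.

Lemma hull_dot_le a x : hull f a -> dot a x <= C * enorm x.
Proof.
apply: conv_dot_le => _ [u _ <-]; rewrite dotZl.
have := dot_le_enorm (svec u) x; rewrite enorm_svec mul1r => ux.
apply: le_trans (_ : f u * enorm x <= _); last by rewrite ler_wpM2r ?enorm_ge0 ?f_le.
by rewrite ler_wpM2l ?(ltW (f_gt0 u)).
Qed.

Lemma hull_supp_ge a x : hull f a -> dot a x <= h x.
Proof.
by apply: supp_fun_ge; exists (C * enorm x) => _ [b fb <-]; exact: hull_dot_le.
Qed.

Lemma hull_supp_le x M : (forall a, hull f a -> dot a x <= M) -> h x <= M.
Proof. by apply: supp_fun_le; exists (f point *: svec (point : S)); exact: hull_gen. Qed.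

Lemma hull_supp_le_enorm x : h x <= C * enorm x.
Proof. by apply: hull_supp_le => a; exact: hull_dot_le. Qed.

Lemma hull_supp_ge_enorm x : c * enorm x <= h x.
Proof.
have [->|x0] := eqVneq x 0.
  rewrite /Defs.enorm dot0l sqrtr0 mulr0.
  by apply: le_trans (hull_supp_ge 0 (hull_gen f point)); rewrite dotC dot0l.
have e0 := enorm_gt0 x0.
have ux : dot ((enorm x)^-1 *: x) ((enorm x)^-1 *: x) == 1.
  by rewrite dotZl dotZr -sqr_enorm; apply/eqP; field; rewrite gt_eqF.
pose u : S := exist _ ((enorm x)^-1 *: x) ux.
apply: le_trans (hull_supp_ge x (hull_gen f u)).
rewrite dotZl [svec u]/= dotZl -sqr_enorm.
have -> : (enorm x)^-1 * enorm x ^+ 2 = enorm x by field; rewrite gt_eqF.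
by rewrite ler_wpM2r ?enorm_ge0.
Qed.

Local Notation L := (wulff_shape h).

Lemma hull_body : convex_body0 L.
Proof. exact: wulff_shape_body c0 hull_supp_ge_enorm hull_supp_le_enorm. Qed.

Let C0 : 0 <= C.
Proof. exact: le_trans (ltW c0) (le_trans (f_ge (point : S)) (f_le point)). Qed.

Lemma le_radial_hull_body u : f u <= radial L u.
Proof.
apply: (rays_le_radial c0 (wulff_shape_ball hull_supp_ge_enorm)
  (wulff_shape_bounded C0 hull_supp_le_enorm)).
by split=> // y; exact/hull_supp_ge/hull_gen.
Qed.

Lemma radial_hull_body_mem u : L (radial L u *: svec u).
Proof.
move=> y; rewrite dotZl.
have rho0 : 0 < radial L u := lt_le_trans (f_gt0 u) (le_radial_hull_body u).
have [uy0|uy0] := leP (dot (svec u) y) 0.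
  apply: le_trans (mulr_ge0_le0 (ltW rho0) uy0) (le_trans _ (hull_supp_ge_enorm y)).
  by rewrite mulr_ge0 ?enorm_ge0 ?ltW.
rewrite -ler_pdivlMr //; apply: ge_sup.
  by exists (f u); split=> // z; exact/hull_supp_ge/hull_gen.
by move=> t [t0 /(_ y)]; rewrite dotZl ler_pdivlMr.
Qed.

Lemma supp_fun_hull_radial : supp_fun (hull (radial L)) = h.
Proof.
have hull_rho_L a : hull (radial L) a -> L a.
  by move=> rho_a y; apply: conv_dot_le rho_a => _ [u _ <-]; exact: radial_hull_body_mem.
have rho_ub x : has_ubound [set dot b x | b in hull (radial L)].
  by exists (h x) => _ [b /hull_rho_L Lb <-].
apply/funext => x; apply/eqP; rewrite eq_le; apply/andP; split.
  apply: supp_fun_le => [|a /hull_rho_L]; last exact.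
  by exists (radial L point *: svec point); exact: hull_gen.
apply: hull_supp_le => a; apply: conv_dot_le => _ [u _ <-].
rewrite dotZl; have [ux0|ux0] := leP 0 (dot (svec u) x).
  apply: le_trans (supp_fun_ge (rho_ub x) (hull_gen _ u)).
  by rewrite dotZl ler_wpM2r // le_radial_hull_body.
(* the antipodal generator has positive inner product with [x] *)
apply: le_trans (supp_fun_ge (rho_ub x) (hull_gen _ (antipode u))).
have rho0 : 0 < radial L (antipode u).
  exact: lt_le_trans (f_gt0 _) (le_radial_hull_body _).
have -> : svec (antipode u) = - svec u by [].
have : f u * dot (svec u) x < 0 by rewrite pmulr_rlt0.
have : 0 <= radial L (antipode u) * - dot (svec u) x by rewrite mulr_ge0 ?oppr_ge0 ?ltW.
by rewrite dotZl dotNl; lra.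
Qed.

End HullOfBoundedFunction.

Lemma le0_ger_powR (R : realType) (q x y : R) : q <= 0 -> 0 < x -> x <= y ->
  y `^ q <= x `^ q.
Proof.
move=> q0 x0 xy; have y0 := lt_le_trans x0 xy.
rewrite -(opprK q) !(powRN _ (- q)) lef_pV2 ?posrE ?powR_gt0 //.
by apply: ge0_ler_powR => //; rewrite ?oppr_ge0 // nnegrE ltW.
Qed.

Section PowerMean.
Variables (R : realType) (n : nat) (mu : {finite_measure set (sphere R n) -> \bar R}).
Local Notation S := (sphere R n).

Definition pow_mean (q : R) (f : S -> R) : R :=
  (fine (mu setT))^-1 * Rintegral mu setT (fun u => f u `^ q).

Lemma Cplus_powR_bounds (f : S -> R) q : Cplus f ->
  exists a b, 0 < a /\ forall u, a <= f u `^ q <= b.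
Proof.
move=> [f0 /sphere_continuous_extrema [u [v fuv]]].
have [q0|q0] := leP 0 q.
  exists (f u `^ q), (f v `^ q); split=> [|w]; first exact: powR_gt0.
  have nn (x : R) : 0 < x -> x \is Num.nneg by move=> x0; rewrite nnegrE ltW.
  by have /andP[fuw fwv] := fuv w; rewrite !(ge0_ler_powR q0) ?nn.
exists (f v `^ q), (f u `^ q); split=> [|w]; first exact: powR_gt0.
by have /andP[fuw fwv] := fuv w; rewrite !le0_ger_powR // ltW.
Qed.

Lemma integrable_Cplus_powR (f : S -> R) q : Cplus f ->
  mu.-integrable setT (EFin \o (fun u => f u `^ q)).
Proof.
move=> fC; have [a [b [a0 fab]]] := Cplus_powR_bounds q fC.
apply: measurable_bounded_integrable => //.
- by rewrite -ge0_fin_numE ?measure_ge0 ?fin_num_measure.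
- apply: (measurableT_comp (measurable_powR q)) => //.
  exact: sphere_continuous_measurable (Cplus_sphere_continuous fC).
exists b; split=> [|M bM u _]; first exact: num_real.
have /andP[au ub] := fab u; rewrite /= ger0_norm ?powR_ge0 //.
by rewrite (le_trans ub) // ltW.
Qed.

Lemma pow_mean_gt0 (f : S -> R) q : mu setT != 0%E -> Cplus f -> 0 < pow_mean q f.
Proof.
move=> mu0 fC; have [a [b [a0 fab]]] := Cplus_powR_bounds q fC.
have mu_gt0 : 0 < fine (mu setT).
  rewrite fine_gt0 // lt_def mu0 measure_ge0.
  by rewrite -ge0_fin_numE ?measure_ge0 ?fin_num_measure.
rewrite mulr_gt0 ?invr_gt0 // (lt_le_trans _ (_ : a * fine (mu setT) <= _)) ?mulr_gt0 //.
rewrite -Rintegral_cst //; apply: le_Rintegral => //.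
- exact: finite_measure_integrable_cst.
- exact: integrable_Cplus_powR.
- by move=> u _; case/andP: (fab u).
Qed.

Lemma le_pow_mean (f g : S -> R) q : Cplus f -> Cplus g ->
  (forall u, f u `^ q <= g u `^ q) -> pow_mean q f <= pow_mean q g.
Proof.
move=> fC gC fg; rewrite ler_wpM2l ?invr_ge0 ?fine_ge0 ?measure_ge0 //.
by apply: le_Rintegral => //; exact: integrable_Cplus_powR.
Qed.

End PowerMean.

Lemma le_Phi (R : realType) (n : nat)
    (lam mu : {finite_measure set (sphere R n) -> \bar R}) (p : R)
    (f g : sphere R n -> R) :
  p != 0 -> mu setT != 0%E -> Cplus f -> Cplus g -> (forall u, f u <= g u) ->
  supp_fun (hull f) = supp_fun (hull g) -> Phi lam mu p f <= Phi lam mu p g.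
Proof.
move=> p0 mu0 fC gC fg supp_fg; have [[f0 _] [g0 _]] := (fC, gC).
rewrite /Phi supp_fg lerD2l -!/(pow_mean mu (- p) _) lerN2.
have Mf := pow_mean_gt0 (- p) mu0 fC; have Mg := pow_mean_gt0 (- p) mu0 gC.
move: p0; rewrite neq_lt => /orP[p_lt0|p_gt0].
  apply: ler_wnM2l; first by rewrite invr_le0 ltW.
  rewrite ler_ln ?posrE //; apply: le_pow_mean => // u.
  by apply: (ge0_ler_powR _ _ _ (fg u)); rewrite ?oppr_ge0 ?nnegrE ltW ?f0 ?g0.
apply: ler_wpM2l; first by rewrite invr_ge0 ltW.
rewrite ler_ln ?posrE //; apply: le_pow_mean => // u.
by apply: le0_ger_powR (fg u); rewrite ?oppr_le0 ?ltW.
Qed.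

Theorem lemma5p1 (R : realType) (n : nat)
    (lam mu : {finite_measure set (sphere R n) -> \bar R}) (p : R) :
  p != 0 -> lam setT != 0%E -> mu setT != 0%E ->
  forall K : set 'rV[R]_n.+1, convex_body0 K ->
  ((forall L : set 'rV[R]_n.+1, convex_body0 L ->
      Phi lam mu p (radial L) <= Phi lam mu p (radial K)) <->
   (forall f : sphere R n -> R, Cplus f ->
      Phi lam mu p f <= Phi lam mu p (radial K))).
Proof.
move=> p0 _ mu0 K _; split=> [K_max f fC|f_max L /radial_Cplus]; last exact: f_max.
have [f0 /sphere_continuous_extrema [u [v f_uv]]] := fC.
apply: le_trans (K_max _ (hull_body (f0 u) f_uv)).
apply: le_Phi => //; first exact/radial_Cplus/hull_body.
- exact: le_radial_hull_body.
- by rewrite (supp_fun_hull_radial (f0 u) f_uv).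
Qed.
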